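(* For every $C\ge1$ and $\epsilon>0$ there is a polynomial $p$ such that every $C$-dense instance of MAXCUT with vertex set $V$ has at most $p(|V|)$ cuts that are $(1+\epsilon)$-locally stable.
   Context: An instance of MAXCUT is a finite vertex set $V$ and a symmetric function $w:V\times V\to[0,\infty)$ with zero diagonal whose support graph is connected. $\tau(x)=\sum_y w(x,y)$; the instance is $C$-dense if $w(x,y)\le C\frac{\tau(x)}{|V|}$ for all $x,y$. A cut is a partition $(S,\bar S)$ of $V$; $\xi(x)$ is the total weight of edges $xy$ crossing the cut and $\iota(x)=\tau(x)-\xi(x)$. A cut is $\gamma$-locally stable if $\xi(x)\ge\gamma\,\iota(x)$ for all $x\in V$. *)

From HB Require Import structures.
From mathcomp Require Import all_boot all_order all_algebra.
From mathcomp Require Import reals.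
Set Implicit Arguments. Unset Strict Implicit. Unset Printing Implicit Defensive.
Import Order.TTheory GRing.Theory Num.Theory.
Local Open Scope ring_scope.

Section MaxCut.
Variables (R : realType) (V : finType).
Implicit Types (w : V -> V -> R) (S : {set V}) (x y : V).

Definition support_rel w : rel V := fun x y => w x y != 0.

Definition maxcut_instance w : Prop :=
  [/\ (forall x y, 0 <= w x y),
      (forall x y, w x y = w y x),
      (forall x, w x x = 0)
    & (forall x y, connect (support_rel w) x y)].

Definition tau w x : R := \sum_(y : V) w x y.

Definition dense (C : R) w : Prop :=
  forall x y, w x y <= C * tau w x / #|V|%:R.

Definition xi w S x : R := \sum_(y : V | (y \in S) != (x \in S)) w x y.

Definition iota w S x : R := tau w x - xi w S x.

Definition locally_stable (gamma : R) w S : bool :=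
  [forall x, gamma * iota w S x <= xi w S x].

End MaxCut.

From HB Require Import structures.
From mathcomp Require Import all_boot all_order all_algebra.
From mathcomp Require Import reals.
From mathcomp Require Import ring lra.
Import Order.TTheory GRing.Theory Num.Theory.
Local Open Scope ring_scope.

(* Let sgb b = +1/-1 encode the side of a vertex and
   local_field T x = sum_y w(x,y) sgb(y \in T).  A (1+eps)-stable cut S is a
   strict best response to itself, with a margin proportional to tau(x):
   x lies in S iff its local field is negative.  By density, changing T on
   o(|V|) vertices moves every local field by o(tau(x)), so S is recovered as
   the best response to any T that is close to S.  Such a T is guessed from k
   labelled vertices, with k depending only on C and eps: a second moment
   argument gives a sample whose estimates of all local fields have small
   tau-normalised quadratic error, and each misguessed vertex costs a fixed
   share of that error.  So every stable cut is decoded from one of at most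
   (2|V|)^k labelled samples. *)

Section StableCuts.
Variables (R : realType) (V : finType) (w : V -> V -> R).
Implicit Types (C eps : R) (S T : {set V}) (x y : V) (K : seq V).

Definition sgb (b : bool) : R := if b then 1 else -1.

Lemma sgb_sqr (b : bool) : sgb b ^+ 2 = 1.
Proof. by case: b; rewrite /sgb ?sqrrN expr1n. Qed.

Lemma norm_sgb (b : bool) : `|sgb b| = 1.
Proof. by case: b; rewrite /sgb ?normrN normr1. Qed.

Lemma sgb_lt0_eq (a : R) (b : bool) : a * sgb b < 0 -> (a < 0) = b.
Proof.
by case: b; rewrite /sgb ?mulr1 ?mulrN1 ?oppr_lt0 // => /ltW; rewrite leNgt => /negbTE.
Qed.

Definition local_field T x : R := \sum_y w x y * sgb (y \in T).

Lemma local_field_sgb S x :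
  local_field S x * sgb (x \in S) = tau w x - 2 * xi w S x.
Proof.
rewrite /local_field /tau /xi big_distrl /=.
rewrite (bigID (fun y => (y \in S) != (x \in S))) /=.
rewrite [X in X - _](bigID (fun y => (y \in S) != (x \in S))) /=.
rewrite (eq_bigr (fun y => - w x y)); last first.
  by move=> y; rewrite /sgb; case: (y \in S); case: (x \in S) => //= _; ring.
rewrite [X in _ + X = _](eq_bigr (fun y => w x y)); last first.
  by move=> y; rewrite /sgb; case: (y \in S); case: (x \in S) => //= _; ring.
rewrite sumrN; ring.
Qed.

Lemma locally_stable_margin eps S x : 0 < eps ->
  locally_stable (1 + eps) w S ->
  (2 + eps) * (local_field S x * sgb (x \in S)) <= - (eps * tau w x).
Proof.
move=> eps_gt0 /forallP /(_ x); rewrite local_field_sgb /iota => stable_x.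
rewrite -subr_le0.
have -> : (2 + eps) * (tau w x - 2 * xi w S x) - - (eps * tau w x)
  = 2 * ((1 + eps) * (tau w x - xi w S x) - xi w S x) by ring.
rewrite pmulr_rle0 ?subr_le0 //; lra.
Qed.

Hypothesis w_ge0 : forall x y, 0 <= w x y.

Lemma local_field_dist S T x : `|local_field T x - local_field S x| <=
  2 * \sum_(y in [set y | (y \in T) != (y \in S)]) w x y.
Proof.
rewrite /local_field -sumrB big_distrr /= [X in _ <= X]big_mkcond /=.
apply: le_trans (ler_norm_sum _ _ _) _; apply: ler_sum => y _.
rewrite inE -mulrBr normrM ger0_norm // /sgb.
case: (y \in T); case: (y \in S); rewrite /= ?subrr ?normr0 ?mulr0 //.
- by rewrite opprK ger0_norm; lra.
- by rewrite -opprD normrN ger0_norm; lra.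
Qed.

Lemma sum_dense_le C (F : {set V}) x : dense C w ->
  \sum_(y in F) w x y <= #|F|%:R * (C * tau w x / #|V|%:R).
Proof.
move=> w_dense; rewrite [leRHS]mulr_natl -[leRHS]sumr_const.
by apply: ler_sum => y _; apply: w_dense.
Qed.

Lemma tau_gt0 x : (forall x y, connect (support_rel w) x y) ->
  (1 < #|V|)%N -> 0 < tau w x.
Proof.
move=> w_conn /card_gt1P [a [b [_ _ neq_ab]]].
have [y neq_yx] : exists y, y != x.
  by case: (eqVneq a x) => [<-|]; [exists b; rewrite eq_sym | exists a].
case/connectP: (w_conn x y) => [[|z p] /= path_xy last_xy].
  by rewrite -last_xy eqxx in neq_yx.
have w_xz : 0 < w x z.
  by case/andP: path_xy; rewrite /support_rel lt_def => -> _; rewrite w_ge0.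
rewrite /tau (bigD1 z) //=.
by rewrite ltr_pwDl // sumr_ge0.
Qed.

Definition best_response T : {set V} := [set x | local_field T x < 0].

Lemma best_response_eq C eps S T : 0 < eps -> dense C w ->
  locally_stable (1 + eps) w S -> (forall x, 0 < tau w x) ->
  0 < #|V|%:R :> R ->
  2 * C * (2 + eps) * #|[set y | (y \in T) != (y \in S)]|%:R < eps * #|V|%:R ->
  best_response T = S.
Proof.
move=> eps_gt0 w_dense S_stable tau_gt0 n_gt0 few_diff; apply/setP => x.
set F := [set y | _] in few_diff; set n := #|V|%:R in n_gt0 few_diff.
have margin := @locally_stable_margin eps S x eps_gt0 S_stable.
have shift : (2 + eps) * `|local_field T x - local_field S x| < eps * tau w x.
  apply: (@le_lt_trans _ _ ((2 + eps) * (2 * (#|F|%:R * (C * tau w x / n))))).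
    rewrite ler_pM2l; last lra.
    by apply: le_trans (local_field_dist S T x) _; rewrite ler_pM2l ?sum_dense_le.
  have -> : (2 + eps) * (2 * (#|F|%:R * (C * tau w x / n)))
      = 2 * C * (2 + eps) * #|F|%:R * tau w x / n by ring.
  by rewrite ltr_pdivrMr // [ltRHS]mulrAC ltr_pM2r.
have shift_sgb : (local_field T x - local_field S x) * sgb (x \in S)
    <= `|local_field T x - local_field S x|.
  by rewrite -[leRHS]mulr1 -(norm_sgb (x \in S)) -normrM ler_norm.
rewrite inE; apply: sgb_lt0_eq; rewrite -(pmulr_rlt0 _ (_ : 0 < 2 + eps)); last lra.
have -> : local_field T x * sgb (x \in S) = local_field S x * sgb (x \in S)
    + (local_field T x - local_field S x) * sgb (x \in S) by ring.
rewrite mulrDr; move: shift_sgb; rewrite -(ler_pM2l (_ : 0 < 2 + eps)); lra.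
Qed.

Definition label S K : seq (V * bool) :=
  [seq (y, y \in S) | y <- K].

Definition sample_estimate (L : seq (V * bool)) x : R :=
  \sum_(p <- L) w x p.1 * sgb p.2.

(* A uniformly random y makes |V| w(x,y) sgb(y \in S) an unbiased estimator
   of the local field; this is the squared error of the sum of such
   estimators over the sample K, normalised by tau^2. *)
Definition sample_error S K : R :=
  \sum_x (#|V|%:R * sample_estimate (label S K) x
          - (size K)%:R * local_field S x) ^+ 2 / tau w x ^+ 2.

Lemma sumr_sqr_shift (a : V -> R) (c m : R) :
  \sum_y (c + a y - m) ^+ 2 =
  #|V|%:R * (c - m) ^+ 2 + 2 * (c - m) * \sum_y a y + \sum_y a y ^+ 2.
Proof.
rewrite (eq_bigr (fun y => (c - m) ^+ 2 + 2 * (c - m) * a y + a y ^+ 2)).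
  by rewrite !big_split /= sumr_const -big_distrr -[_ *+ _]mulr_natl.
by move=> y _; ring.
Qed.

Lemma sum_sqr_deviation_le C S x (c : R) : dense C w -> 0 < #|V|%:R :> R ->
  \sum_y (c + #|V|%:R * (w x y * sgb (y \in S)) - local_field S x) ^+ 2
    <= #|V|%:R * c ^+ 2 + #|V|%:R * C * tau w x ^+ 2.
Proof.
move=> w_dense n_gt0; rewrite sumr_sqr_shift -big_distrr /=.
set n := #|V|%:R in n_gt0 *; set f := local_field S x.
have second_moment : \sum_y (n * (w x y * sgb (y \in S))) ^+ 2
    <= n * C * tau w x ^+ 2.
  have -> : \sum_y (n * (w x y * sgb (y \in S))) ^+ 2
      = n ^+ 2 * \sum_y w x y * w x y.
    rewrite big_distrr; apply: eq_bigr => y _.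
    by rewrite !exprMn sgb_sqr mulr1 expr2.
  have -> : n * C * tau w x ^+ 2 = n ^+ 2 * \sum_y w x y * (C * tau w x / n).
    by rewrite -big_distrl /= -/(tau w x); field; rewrite gt_eqF.
  rewrite ler_pM2l ?exprn_gt0 //.
  by apply: ler_sum => y _; rewrite ler_wpM2l.
have : 0 <= n * f ^+ 2 by rewrite mulr_ge0 ?sqr_ge0 ?ltW.
have -> : \sum_i w x i * sgb (i \in S) = f by [].
lra.
Qed.

Lemma sum_sample_error_cons C S K : dense C w -> 0 < #|V|%:R :> R ->
  (forall x, 0 < tau w x) ->
  \sum_y sample_error S (y :: K) <= #|V|%:R * (sample_error S K + #|V|%:R * C).
Proof.
move=> w_dense n_gt0 tau_gt0; rewrite /sample_error exchange_big /=.
set n := #|V|%:R in n_gt0 *.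
set c := fun x => n * sample_estimate (label S K) x - (size K)%:R * local_field S x.
apply: (@le_trans _ _ (\sum_x (n * (c x ^+ 2 / tau w x ^+ 2) + n * C))); last first.
  by rewrite big_split /= sumr_const -big_distrr /= -[n * C *+ _]mulr_natl mulrDr.
apply: ler_sum => x _.
have tau2_gt0 : 0 < tau w x ^+ 2 by rewrite exprn_gt0.
have -> : n * (c x ^+ 2 / tau w x ^+ 2) + n * C
    = (n * c x ^+ 2 + n * C * tau w x ^+ 2) / tau w x ^+ 2.
  by field; rewrite gt_eqF.
rewrite -big_distrl /= ler_pM2r ?invr_gt0 //.
apply: le_trans (@sum_sqr_deviation_le C S x (c x) w_dense n_gt0).
rewrite le_eqVlt; apply/orP; left; apply/eqP/eq_bigr => y _.
by rewrite /c /sample_estimate big_cons /= -natr1; ring.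
Qed.

Lemma exists_le_mean (f : V -> R) (M : R) : 0 < #|V|%:R :> R ->
  \sum_y f y <= #|V|%:R * M -> exists y, f y <= M.
Proof.
move=> n_gt0 sum_le; case: (pickP (fun y => f y <= M)) => [y le_fy|all_gt].
  by exists y.
have : \sum_(y : V) M < \sum_(y : V) f y.
  apply: ltr_sum => [|y _]; last by rewrite ltNge all_gt.
  move: n_gt0; rewrite ltr0n => /card_gt0P [y _].
  by apply/hasP; exists y; rewrite ?mem_index_enum.
rewrite sumr_const -mulr_natl; lra.
Qed.

Lemma exists_sample C S k : dense C w -> 0 < #|V|%:R :> R ->
  (forall x, 0 < tau w x) ->
  exists K, size K = k /\ sample_error S K <= k%:R * #|V|%:R * C.
Proof.
move=> w_dense n_gt0 tau_gt0; elim: k => [|k [K [size_K error_K]]].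
  exists [::]; split => //; rewrite /sample_error big1 ?mul0r // => x _.
  by rewrite /sample_estimate big_nil mulr0 mul0r subrr expr0n mul0r.
have [y error_y] := @exists_le_mean _ _ n_gt0
  (@sum_sample_error_cons C S K w_dense n_gt0 tau_gt0).
exists (y :: K); split; first by rewrite /= size_K.
by apply: le_trans error_y _; rewrite -natr1; lra.
Qed.

Definition sample_guess (L : seq (V * bool)) : {set V} :=
  [set x | sample_estimate L x < 0].

Definition decode (L : seq (V * bool)) : {set V} :=
  best_response (sample_guess L).

Lemma misguessed_error_le eps S K x : 0 < eps ->
  locally_stable (1 + eps) w S -> 0 < tau w x ->
  (x \in sample_guess (label S K)) != (x \in S) ->
  ((size K)%:R * eps) ^+ 2 <= (2 + eps) ^+ 2 *
    ((#|V|%:R * sample_estimate (label S K) x - (size K)%:R * local_field S x)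
       ^+ 2 / tau w x ^+ 2).
Proof.
move=> eps_gt0 S_stable tau_x_gt0 misguessed.
have margin := @locally_stable_margin eps S x eps_gt0 S_stable.
set g := sample_estimate _ x in misguessed *; set f := local_field S x in margin *.
set k := (size K)%:R; set n := #|V|%:R.
have guess_sgb : 0 <= g * sgb (x \in S).
  rewrite leNgt; apply: contra misguessed => /sgb_lt0_eq <-.
  by rewrite inE.
have error_sgb : k * eps * tau w x <= (2 + eps) * ((n * g - k * f) * sgb (x \in S)).
  have -> : (2 + eps) * ((n * g - k * f) * sgb (x \in S))
      = (2 + eps) * n * (g * sgb (x \in S))
        - k * ((2 + eps) * (f * sgb (x \in S))) by ring.
  have : 0 <= (2 + eps) * n * (g * sgb (x \in S)).
    by rewrite mulr_ge0 // mulr_ge0 ?ler0n //; lra.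
  have : k * ((2 + eps) * (f * sgb (x \in S))) <= k * - (eps * tau w x).
    by rewrite ler_wpM2l ?ler0n.
  lra.
have k_eps_ge0 : 0 <= k * eps by rewrite mulr_ge0 ?ler0n //; lra.
have -> : (2 + eps) ^+ 2 * ((n * g - k * f) ^+ 2 / tau w x ^+ 2)
    = ((2 + eps) * ((n * g - k * f) * sgb (x \in S)) / tau w x) ^+ 2.
  by rewrite expr_div_n !exprMn sgb_sqr mulr1 mulrA.
have k_eps_le : k * eps <= (2 + eps) * ((n * g - k * f) * sgb (x \in S)) / tau w x.
  by rewrite ler_pdivlMr.
by rewrite ler_pXn2r ?nnegrE //; apply: le_trans k_eps_le.
Qed.

Lemma sample_size_bound (a k e C n P : R) :
  0 < k -> 0 < e -> 0 < C -> 0 < n ->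
  a * (k * e) ^+ 2 <= (2 + e) ^+ 2 * P -> P <= k * n * C ->
  2 * C ^+ 2 * (2 + e) ^+ 3 < k * e ^+ 3 ->
  2 * C * (2 + e) * a < e * n.
Proof.
move=> k_gt0 e_gt0 C_gt0 n_gt0 error_ge error_le k_large.
have factor_gt0 : 0 < 2 * C * (2 + e) by rewrite !mulr_gt0 //; lra.
have upper : 2 * C * (2 + e) * (a * (k * e) ^+ 2)
    <= 2 * C * (2 + e) * ((2 + e) ^+ 2 * (k * n * C)).
  rewrite ler_pM2l //; apply: le_trans error_ge _.
  by rewrite ler_pM2l // exprn_gt0 //; lra.
have lower : 2 * C ^+ 2 * (2 + e) ^+ 3 * (k * n) < k * e ^+ 3 * (k * n).
  by rewrite ltr_pM2r ?mulr_gt0.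
rewrite -(ltr_pM2r (_ : 0 < (k * e) ^+ 2)) ?exprn_gt0 ?mulr_gt0 //.
lra.
Qed.

Lemma decode_locally_stable C eps S k :
  0 < eps -> 0 < C -> dense C w -> locally_stable (1 + eps) w S ->
  0 < #|V|%:R :> R -> (forall x, 0 < tau w x) ->
  2 * C ^+ 2 * (2 + eps) ^+ 3 < k%:R * eps ^+ 3 ->
  exists L, size L = k /\ decode L = S.
Proof.
move=> eps_gt0 C_gt0 w_dense S_stable n_gt0 tau_gt0 k_large.
have k_gt0 : 0 < k%:R :> R.
  rewrite -(pmulr_lgt0 _ (exprn_gt0 3 eps_gt0)); apply: lt_trans k_large.
  by rewrite !mulr_gt0 ?exprn_gt0 //; lra.
have [K [size_K error_K]] := exists_sample C S k w_dense n_gt0 tau_gt0.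
exists (label S K); split; first by rewrite size_map.
set F := [set y | (y \in sample_guess (label S K)) != (y \in S)].
have error_F : #|F|%:R * (k%:R * eps) ^+ 2 <= (2 + eps) ^+ 2 * sample_error S K.
  rewrite mulr_natl -sumr_const /sample_error big_distrr /=.
  rewrite [leRHS](bigID (mem F)) /=.
  apply: ler_wpDr.
    by apply: sumr_ge0 => x _; rewrite mulr_ge0 ?sqr_ge0 ?divr_ge0 ?sqr_ge0.
  by apply: ler_sum => x; rewrite inE -size_K; apply: misguessed_error_le.
apply: (@best_response_eq C eps S _ eps_gt0 w_dense S_stable tau_gt0 n_gt0).
exact: sample_size_bound k_gt0 eps_gt0 C_gt0 n_gt0 error_F error_K k_large.
Qed.

Lemma card_locally_stable_le C eps k : 0 < eps -> 0 < C -> dense C w ->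
  (forall x y, connect (support_rel w) x y) -> (1 < #|V|)%N ->
  2 * C ^+ 2 * (2 + eps) ^+ 3 < k%:R * eps ^+ 3 ->
  (#|[set S | locally_stable (1 + eps) w S]| <= (2 * #|V|) ^ k)%N.
Proof.
move=> eps_gt0 C_gt0 w_dense w_conn V_gt1 k_large.
have n_gt0 : 0 < #|V|%:R :> R by rewrite ltr0n ltnW.
have tau_pos x : 0 < tau w x by apply: tau_gt0.
have decoded : [set S | locally_stable (1 + eps) w S]
    \subset [set decode t | t : k.-tuple (V * bool)].
  apply/subsetP => S; rewrite inE => S_stable.
  have [L [/eqP size_L <-]] :=
    @decode_locally_stable C eps S k eps_gt0 C_gt0 w_dense S_stable n_gt0
      tau_pos k_large.
  by apply/imsetP; exists (Tuple size_L).
apply: leq_trans (subset_leq_card decoded) _.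
apply: leq_trans (leq_imset_card _ _) _.
by rewrite card_tuple card_prod card_bool mulnC.
Qed.

End StableCuts.

Lemma card_sets_le (T : finType) (P : pred {set T}) :
  (#|[set S | P S]| <= 2 ^ #|T|)%N.
Proof.
rewrite -cardsT -card_powerset; apply: subset_leq_card.
by apply/subsetP => S _; rewrite powersetE subsetT.
Qed.

Lemma exists_nat_mul_gt (R : archiRealFieldType) (a b : R) :
  0 < b -> exists k : nat, a < k%:R * b.
Proof.
move=> b_gt0; exists (Num.Def.archi_bound (`|a| / b)).
rewrite -ltr_pdivrMr //; apply: le_lt_trans (archi_boundP _).
  by rewrite ler_pM2r ?invr_gt0 ?ler_norm.
by rewrite divr_ge0 ?normr_ge0 ?ltW.
Qed.

Theorem corollary1 (R : realType) (C eps : R) (hC : 1 <= C) (heps : 0 < eps) :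
  exists p : {poly R},
    forall (V : finType) (w : V -> V -> R),
      maxcut_instance w -> dense C w ->
      #|[set S : {set V} | locally_stable (1 + eps) w S]|%:R
        <= p.[#|V|%:R].
Proof.
have [k k_large] :=
  @exists_nat_mul_gt _ (2 * C ^+ 2 * (2 + eps) ^+ 3) _ (exprn_gt0 3 heps).
exists ((2%:P * 'X) ^+ k + 2%:P) => V w [w_ge0 _ _ w_conn] w_dense.
rewrite hornerD hornerC horner_exp hornerCM hornerX -natrM -natrX -natrD ler_nat.
have C_gt0 : 0 < C by lra.
case: (leqP #|V| 1) => [V_le1 | V_gt1].
  apply: leq_trans (card_sets_le _ (locally_stable (1 + eps) w)) _.
  apply: leq_trans (leq_addl ((2 * #|V|) ^ k) _).
  exact: (leq_pexp2l (isT : 0 < 2)%N V_le1).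
apply: leq_trans (leq_addr _ _).
exact: card_locally_stable_le heps C_gt0 w_dense w_conn V_gt1 k_large.
Qed.
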